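(* Let $\ell, s \in \mathbb{N}$ with $1\le s \leq \ell$, let $f,\Lambda,G,R,\Omega$ be as in the context, and let $\tau \in \mathbb{N}$ with $\tau \ge \deg_{\mathcal{H}}(\Lambda)$. Define $\Lambda_i := \Lambda^{s-i}\Omega^i$ for $i=0,\dots,s-1$ and $\Psi_t := \Lambda^s f^t$ for $t=1,\dots,\ell$. Then the vector $(\Lambda_0,\dots,\Lambda_{s-1},\Psi_1,\dots,\Psi_\ell)\in\mathcal{R}^{s+\ell}$ satisfies the conditions $$\sum_{i=0}^{s-1}\Lambda_i A_{t,i} \equiv \Psi_t \mod G_t \ \ (t=1,\dots,\ell),\qquad \deg_{\mathcal{H}}(\Lambda_i)\le s\tau+i(2g-1)\ \ (i=0,\dots,s-1),\qquad \deg_{\mathcal{H}}(\Psi_t)\le s\tau+tm\ \ (t=1,\dots,\ell),$$ where the congruences are in $\mathcal{R}$ (the difference lies in the ideal $G_t\mathcal{R}$).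
   Context: Let $q$ be a prime power and $\mathbb{F}_{q^2}$ the field with $q^2$ elements. The Hermitian curve $\mathcal{H}/\mathbb{F}_{q^2}$ is the smooth projective plane curve with affine equation $Y^q+Y=X^{q+1}$; it has genus $g=\tfrac12 q(q-1)$ and $q^3+1$ rational points $P_1,\dots,P_{q^3},P_\infty$, where $P_\infty$ is the point at infinity and $P_1,\dots,P_{q^3}$ are the affine rational points. Let $\mathcal{R} = \bigcup_{m\ge 0}\mathcal{L}(mP_\infty) = \mathbb{F}_{q^2}[X,Y]/(Y^q+Y-X^{q+1})$, which has $\mathbb{F}_{q^2}$-basis $\{X^iY^j : i\ge 0,\ 0\le j<q\}$, and let $\deg_{\mathcal{H}}(h) = -v_{P_\infty}(h)$ (so $\deg_{\mathcal{H}}(X^iY^j) = iq+j(q+1)$, $\deg_{\mathcal{H}}(0)=-\infty$). Let $n=q^3$ and $m\in\mathbb{N}$ with $2(g-1)<m<n$. Let $f \in \mathcal{L}(mP_\infty)$ (so $\deg_{\mathcal{H}} f \le m$), $\mathbf{c}=(f(P_1),\dots,f(P_n))$, $\mathbf{e}\in\mathbb{F}_{q^2}^n$, received word $\mathbf{r} = \mathbf{c}+\mathbf{e}$, and error positions $\mathcal{E}=\{i : e_i\neq 0\}$. An error locator is a nonzero $\Lambda \in \mathcal{R}$ with $\Lambda(P_i)=0$ for all $i\in\mathcal{E}$; fix one. Let $R\in\mathcal{R}$ with $\deg_{\mathcal{H}}(R) < n+2g$ and $R(P_i)=r_i$ for $i=1,\dots,n$. Let $G = X^{q^2}-X\in\mathcal{R}$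 (so $\deg_{\mathcal{H}} G = n$). Let $\Omega\in\mathcal{R}$ be the unique element with $\Omega G = \Lambda(f-R)$. For $t=1,\dots,\ell$ and $i=0,\dots,s-1$ set $A_{t,i} := \binom{t}{i}R^{t-i}G^i$ (which is $0$ if $i>t$), and $$G_t := X^{\lfloor (t(n+2g-1)+\tau)/q\rfloor+1} \text{ for } t=1,\dots,s-1,\qquad G_t := G^s \text{ for } t=s,\dots,\ell.$$ *)

From HB Require Import structures.
From mathcomp Require Import all_boot all_order all_algebra all_field.
Set Implicit Arguments. Unset Strict Implicit. Unset Printing Implicit Defensive.
Import Order.TTheory GRing.Theory Num.Theory.
Local Open Scope ring_scope.

(* Elements of R = F[X,Y]/(Y^q + Y - X^(q+1)) are represented by bivariate
   polynomials p : {poly {poly F}}: the OUTER variable is Y, the INNER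
   variable (coefficients) is X.  Two representatives denote the same element
   of R iff their difference is divisible by the (Y-monic) Hermitian
   polynomial; the canonical representative is the remainder mod it, which
   lies in the span of {X^i Y^j : 0 <= j < q}. *)

Section Hermitian.
Variable F : fieldType.
Variable q : nat.

Definition hX : {poly {poly F}} := ('X : {poly F})%:P.
Definition hY : {poly {poly F}} := 'X.

Definition hermPoly : {poly {poly F}} := hY ^+ q + hY - hX ^+ q.+1.

Definition hred (p : {poly {poly F}}) : {poly {poly F}} := p %% hermPoly.

Definition heq (p r : {poly {poly F}}) : Prop := hred (p - r) = 0.

Definition hcong (p r g : {poly {poly F}}) : Prop :=
  exists h : {poly {poly F}}, heq (p - r) (g * h).

(* deg_H (p) = -v_{P_oo}(p) = max { i q + j (q+1) : coefficient of X^i Y^j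
   in the canonical representative is nonzero }.  For p = 0 in R this is 0
   (standing for -oo); all bounds below are natural numbers, so
   "deg_H p <= b" is correctly rendered by (degH p <= b)%N. *)
Definition degH (p : {poly {poly F}}) : nat :=
  let r := hred p in
  let c := fun i j : nat => (r`_j)`_i in
  \big[maxn/0%N]_(j < size r)
     \big[maxn/0%N]_(i < size r`_j | c i j != 0) (i * q + j * q.+1)%N.

Definition hevalAt (p : {poly {poly F}}) (a b : F) : F := (p.[b%:P]).[a].

Definition onHerm (a b : F) : bool := b ^+ q + b == a ^+ q.+1.

End Hermitian.

From HB Require Import structures.
From mathcomp Require Import all_boot all_order all_algebra all_field.
From mathcomp Require Import ring zify.
Import Order.TTheory GRing.Theory Num.Theory.
Local Open Scope ring_scope.
Set Implicit Arguments.
Unset Strict Implicit.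

(* Writing f = R + (f - R), the binomial expansion of Lam^s f^t splits into the
   terms with i < s, which become sum_i Lam_i A_{t,i} once Lam (f - R) is
   replaced by Om G, and a multiple of (Lam (f - R))^s = (Om G)^s, hence of G^s;
   for t < s that multiple is empty.  For the degrees, deg_H is the weighted
   degree, with weights q for X and q + 1 for Y, of the representative reduced
   modulo Y^q + Y - X^(q+1): it is subadditive on products, reduction does not
   raise it because Y^q and X^(q+1) have the same weight, and multiplying by the
   X-monic G adds exactly n = q^3, whence deg Om <= deg Lam + 2g - 1. *)

Lemma size_XnsubX (R : nzRingType) n : (1 < n)%N -> size ('X^n - 'X : {poly R}) = n.+1.
Proof. by move=> n_gt1; rewrite size_polyDl size_polyXn // size_polyN size_polyX. Qed.

Lemma monicXnsubX (R : nzRingType) n : (1 < n)%N -> ('X^n - 'X : {poly R}) \is monic.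
Proof.
by move=> n_gt1; rewrite monicE lead_coefDl ?lead_coefXn // size_polyN size_polyX size_polyXn.
Qed.

Lemma exprDn_split (S : comRingType) (x y : S) (s t : nat) :
  (x + y) ^+ t = \sum_(i < s) 'C(t, i)%:R * x ^+ (t - i) * y ^+ i
               + y ^+ s * \sum_(s <= i < t.+1) 'C(t, i)%:R * x ^+ (t - i) * y ^+ (i - s).
Proof.
pose T i := 'C(t, i)%:R * x ^+ (t - i) * y ^+ i.
have -> : (x + y) ^+ t = \sum_(0 <= i < t.+1) T i.
  by rewrite exprDn big_mkord; apply: eq_bigr => i _; rewrite /T -mulrA mulr_natl.
have -> : y ^+ s * \sum_(s <= i < t.+1) 'C(t, i)%:R * x ^+ (t - i) * y ^+ (i - s)
          = \sum_(s <= i < t.+1) T i.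
  rewrite mulr_sumr; apply: eq_big_nat => i /andP [le_si _].
  by rewrite /T -(subnK le_si) exprD subnK //; ring.
rewrite -(big_mkord xpredT T); case: (leqP s t.+1) => [le_st | lt_ts].
  exact: big_cat_nat.
rewrite (big_geq (ltnW lt_ts)) addr0 (@big_cat_nat _ _ _ t.+1 0 s) //= ?(ltnW lt_ts) //.
rewrite [X in _ + X]big1_seq ?addr0 // => i /andP [_]; rewrite mem_index_iota => /andP [lt_ti _].
by rewrite /T bin_small // mulr0n !mul0r.
Qed.

Section PrincipalCongruence.
Variables (S : comRingType) (h : S).

Definition eqmod (a b : S) := exists k, a - b = k * h.

Lemma eqmod_refl a : eqmod a a.
Proof. by exists 0; rewrite subrr mul0r. Qed.

Lemma eqmodD a b c d : eqmod a b -> eqmod c d -> eqmod (a + c) (b + d).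
Proof. by move=> [k1 e1] [k2 e2]; exists (k1 + k2); rewrite mulrDl -e1 -e2; ring. Qed.

Lemma eqmodN a b : eqmod a b -> eqmod (- a) (- b).
Proof. by move=> [k e]; exists (- k); rewrite mulNr -e; ring. Qed.

Lemma eqmodM a b c d : eqmod a b -> eqmod c d -> eqmod (a * c) (b * d).
Proof.
move=> [k1 e1] [k2 e2]; exists (k1 * c + b * k2).
by rewrite mulrDl -mulrA (mulrC c) mulrA -e1 -mulrA -e2; ring.
Qed.

Lemma eqmodX a b n : eqmod a b -> eqmod (a ^+ n) (b ^+ n).
Proof.
move=> eab; elim: n => [|n IHn]; first by rewrite !expr0; apply: eqmod_refl.
by rewrite !exprS; apply: eqmodM.
Qed.

Lemma eqmod_sum I (r : seq I) (P : pred I) (F1 F2 : I -> S) :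
  (forall i, P i -> eqmod (F1 i) (F2 i)) ->
  eqmod (\sum_(i <- r | P i) F1 i) (\sum_(i <- r | P i) F2 i).
Proof. by move=> eF; apply: big_ind2 => //; [apply: eqmod_refl | apply: eqmodD]. Qed.

Lemma key_equation_eqmod (lam om G f r : S) (s t : nat) :
  eqmod (om * G) (lam * (f - r)) ->
  eqmod (\sum_(i < s) lam ^+ (s - i) * om ^+ i * ('C(t, i)%:R * r ^+ (t - i) * G ^+ i)
         + G ^+ s * (om ^+ s * \sum_(s <= i < t.+1)
                                  'C(t, i)%:R * r ^+ (t - i) * (f - r) ^+ (i - s)))
        (lam ^+ s * f ^+ t).
Proof.
move=> key; set D := f - r; set Y := \sum_(s <= i < t.+1) _.
have -> : f = r + D by rewrite /D addrC subrK.
rewrite (exprDn_split r D s t) -/Y mulrDr; apply: eqmodD.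
  rewrite mulr_sumr; apply: eqmod_sum => i _; have le_is := ltnW (ltn_ord i).
  set c := 'C(t, i)%:R * r ^+ (t - i).
  have -> : lam ^+ (s - i) * om ^+ i * (c * G ^+ i) = c * lam ^+ (s - i) * (om * G) ^+ i.
    by rewrite exprMn; ring.
  have -> : lam ^+ s * (c * D ^+ i) = c * lam ^+ (s - i) * (lam * D) ^+ i.
    by rewrite exprMn -{1}(subnK le_is) exprD; ring.
  by apply: eqmodM (eqmod_refl _) (eqmodX _ key).
rewrite !mulrA -!exprMn (mulrC G).
by apply: eqmodM (eqmodX _ key) (eqmod_refl _).
Qed.

End PrincipalCongruence.

Lemma exists_neq0_sum (V : nmodType) (I : finType) (F : I -> V) :
  \sum_i F i != 0 -> exists i, F i != 0.
Proof.
move=> nz; apply/existsP; apply: contraNT nz => /existsPn F0.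
by apply/eqP; rewrite big1 // => i _; apply/eqP; rewrite -[_ == _]negbK F0.
Qed.

Section WeightedDegree.
Variables (R : nzRingType) (a b : nat).
Implicit Types p r : {poly {poly R}}.

Definition wdeg p : nat :=
  \big[maxn/0%N]_(j < size p)
     \big[maxn/0%N]_(i < size p`_j | (p`_j)`_i != 0) (i * a + j * b)%N.

Lemma wdeg_leP p n :
  reflect (forall i j, (p`_j)`_i != 0 -> (i * a + j * b <= n)%N) (wdeg p <= n)%N.
Proof.
apply: (iffP idP) => [/bigmax_leqP wle i j nz | le_n]; last first.
  by apply/bigmax_leqP => j _; apply/bigmax_leqP => i; apply: le_n.
have lt_j : (j < size p)%N.
  by rewrite ltnNge; apply: contra nz => /leq_sizeP -> //; rewrite coef0.
have lt_i : (i < size (p`_j)%R)%N by rewrite ltnNge; apply: contra nz => /leq_sizeP ->.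
by move/bigmax_leqP: (wle (Ordinal lt_j) isT) => /(_ (Ordinal lt_i) nz).
Qed.

Lemma leq_wdeg p i j : (p`_j)`_i != 0 -> (i * a + j * b <= wdeg p)%N.
Proof. by move/wdeg_leP: (leqnn (wdeg p)); apply. Qed.

Lemma wdegD p r : (wdeg (p + r) <= maxn (wdeg p) (wdeg r))%N.
Proof.
apply/wdeg_leP => i j; rewrite !coefD.
have [p0|/leq_wdeg] := eqVneq (p`_j)`_i 0; last by rewrite leq_max => ->.
by rewrite p0 add0r => /leq_wdeg; rewrite leq_max => ->; rewrite orbT.
Qed.

Lemma wdegN p : wdeg (- p) = wdeg p.
Proof.
have le_wdegN r : (wdeg (- r) <= wdeg r)%N.
  by apply/wdeg_leP => i j; rewrite !coefN oppr_eq0 => /leq_wdeg.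
by apply/eqP; rewrite eqn_leq le_wdegN; have := le_wdegN (- p); rewrite opprK.
Qed.

Lemma wdegB p r : (wdeg (p - r) <= maxn (wdeg p) (wdeg r))%N.
Proof. by rewrite -(wdegN r) wdegD. Qed.

Lemma wdegM p r : (wdeg (p * r) <= wdeg p + wdeg r)%N.
Proof.
apply/wdeg_leP => i j; rewrite coefM coef_sum => /exists_neq0_sum [k].
rewrite coefM => /exists_neq0_sum [c nz].
have /leq_wdeg wp : (p`_k)`_c != 0 by apply: contraNneq nz => ->; rewrite mul0r.
have /leq_wdeg wr : (r`_(j - k))`_(i - c) != 0 by apply: contraNneq nz => ->; rewrite mulr0.
have := ltn_ord k; have := ltn_ord c; nia.
Qed.

Lemma wdegCXn (c : {poly R}) n : (wdeg (c%:P * 'X^n) <= (size c).-1 * a + n * b)%N.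
Proof.
apply/wdeg_leP => i j; rewrite coefCM coefXn.
have [-> | _] := eqVneq j n; last by rewrite mulr0 coef0 eqxx.
rewrite mulr1 => nz.
have : (i < size c)%N by rewrite ltnNge; apply: contra nz => /leq_sizeP ->.
by nia.
Qed.

Lemma wdegX p n : (wdeg (p ^+ n) <= n * wdeg p)%N.
Proof.
elim: n => [|n IHn].
  by have := wdegCXn 1 0; rewrite size_poly1 polyC1 mulr1 expr0.
by rewrite exprS; apply: leq_trans (wdegM _ _) _; rewrite mulSn leq_add2l.
Qed.

Lemma leq_wdeg_lead p :
  p != 0 -> ((size (lead_coef p)).-1 * a + (size p).-1 * b <= wdeg p)%N.
Proof.
move=> nz; apply: leq_wdeg; change (lead_coef (lead_coef p) != 0).
by rewrite !lead_coef_eq0.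
Qed.

Lemma wdeg_mulC_monic p (c : {poly R}) :
  c \is monic -> (wdeg p <= wdeg (p * c%:P) - (size c).-1 * a)%N.
Proof.
move=> mon_c; apply/wdeg_leP => i j nz.
have pj_nz : p`_j != 0 by apply: contraNneq nz => ->; rewrite coef0.
have lt_i : (i < size (p`_j)%R)%N by rewrite ltnNge; apply: contra nz => /leq_sizeP ->.
have lead_nz : ((p * c%:P)`_(j))`_(size (p`_j * c)%R).-1 != 0.
  rewrite coefMC; change (lead_coef (p`_j * c) != 0).
  by rewrite lead_coef_Mmonic // lead_coef_eq0.
have := leq_wdeg lead_nz; rewrite size_Mmonic //.
have := monic_neq0 mon_c; rewrite -size_poly_gt0; nia.
Qed.

End WeightedDegree.

Lemma ltn_size_sub_lead (R : nzRingType) (p r : {poly R}) :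
  p != 0 -> size r = size p -> lead_coef r = lead_coef p -> (size (p - r)%R < size p)%N.
Proof.
move=> p_nz eq_size eq_lead; have size_p_gt0 : (0 < size p)%N by rewrite size_poly_gt0.
rewrite -[X in (_ < X)%N]prednK // ltnS; apply/leq_sizeP => j le_j; rewrite coefB.
have [-> | ne_j] := eqVneq j (size p).-1.
  by rewrite -lead_coefE -eq_size -lead_coefE eq_lead subrr.
by rewrite !nth_default ?subrr ?eq_size // -(prednK size_p_gt0) ltn_neqAle eq_sym ne_j.
Qed.

Section ReductionWeight.
Variables (R : idomainType) (a b : nat) (H : {poly {poly R}}).
Hypotheses (monic_H : H \is monic) (wdeg_H : (wdeg a b H <= (size H).-1 * b)%N).

Lemma wdeg_modp p : (wdeg a b (p %% H) <= wdeg a b p)%N.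
Proof.
have ulcH : lead_coef H \is a GRing.unit by rewrite (monicP monic_H) unitr1.
move: {2}(size p) (leqnn (size p)) => n; elim: n p => [|n IHn] p le_pn.
  by move: le_pn; rewrite leqn0 size_poly_eq0 => /eqP ->; rewrite mod0p.
have [lt_pH | le_Hp] := ltnP (size p) (size H); first by rewrite modp_small.
have p_nz : p != 0 by rewrite -size_poly_gt0 (leq_trans _ le_Hp) // size_poly_gt0 monic_neq0.
set k := (size p).-1; set d := (size H).-1; set c := lead_coef p.
have c_nz : c != 0 by rewrite lead_coef_eq0.
set M := 'X^(k - d) * H.
have monic_M : M \is monic by rewrite monicMl ?monicXn.
have size_M : size M = size p.
  rewrite size_monicM ?monic_neq0 ?monicXn // size_polyXn /k /d.
  have := size_poly_gt0 H; rewrite monic_neq0 //; lia.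
(* Cancelling the leading term of [p] with a multiple of [H] cannot raise the
   weight, since [H] has weight at most that of its leading term. *)
set p1 := p - c *: M.
have mod_p1 : p1 %% H = p %% H.
  rewrite Pdiv.IdomainUnit.modpD // Pdiv.IdomainUnit.modpN // Pdiv.IdomainUnit.modpZl //.
  by rewrite modp_mull scaler0 subr0.
have lt_p1 : (size p1 < size p)%N.
  by apply: ltn_size_sub_lead; rewrite ?size_scale ?lead_coefZ ?(monicP monic_M) ?mulr1.
have wdeg_p1 : (wdeg a b p1 <= wdeg a b p)%N.
  apply: leq_trans (wdegB _ _ _ _) _; rewrite geq_max leqnn /=.
  rewrite -mul_polyC /M mulrA; apply: leq_trans (wdegM _ _ _ _) _.
  apply: leq_trans (leq_add (wdegCXn a b c (k - d)) wdeg_H) _.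
  have le_dk : (d <= k)%N by rewrite /d /k; lia.
  by rewrite -addnA -mulnDl subnK //; apply: leq_wdeg_lead.
by rewrite -mod_p1; apply: leq_trans wdeg_p1; apply: IHn; lia.
Qed.

End ReductionWeight.

Section HermitianCurve.
Variables (F : fieldType) (q : nat).
Hypothesis q_gt1 : (1 < q)%N.

Local Notation H := (hermPoly F q).
Local Notation wdegH := (wdeg q q.+1).
Implicit Types p r : {poly {poly F}}.

Lemma hermPolyE : H = 'X^q + ('X - (('X : {poly F}) ^+ q.+1)%:P).
Proof. by rewrite /hermPoly /hY /hX rmorphXn addrA. Qed.

Lemma size_hermPoly : size H = q.+1.
Proof. by rewrite hermPolyE size_polyDl size_polyXn // size_XsubC. Qed.

Lemma monic_hermPoly : H \is monic.
Proof.
by rewrite monicE hermPolyE lead_coefDl ?lead_coefXn // size_polyXn size_XsubC.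
Qed.

Lemma unit_lead_hermPoly : lead_coef H \is a GRing.unit.
Proof. by rewrite (monicP monic_hermPoly) unitr1. Qed.

Lemma wdeg_hermPoly : (wdegH H <= (size H).-1 * q.+1)%N.
Proof.
have wdegXn n : (wdegH ('X^n : {poly {poly F}}) <= n * q.+1)%N.
  by have := wdegCXn q q.+1 (1 : {poly F}) n; rewrite polyC1 mul1r size_poly1.
have wdegC : (wdegH (('X : {poly F}) ^+ q.+1)%:P <= q.+1 * q)%N.
  by have := wdegCXn q q.+1 ('X^(q.+1) : {poly F}) 0; rewrite mulr1 size_polyXn addn0.
rewrite size_hermPoly hermPolyE; apply: leq_trans (wdegD _ _ _ _) _.
rewrite geq_max wdegXn /=; apply: leq_trans (wdegB _ _ _ _) _.
by rewrite geq_max (leq_trans (wdegXn 1)) ?(leq_trans wdegC) //; nia.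
Qed.

Lemma degHE p : degH q p = wdegH (hred q p).
Proof. by []. Qed.

Lemma heq_eqmod p r : heq q p r <-> eqmod H p r.
Proof.
by split=> [/modp_eq0P/(Pdiv.IdomainUnit.dvdpP unit_lead_hermPoly)
           |/(Pdiv.IdomainUnit.dvdpP unit_lead_hermPoly)/modp_eq0P].
Qed.

Lemma eqmod_hred p : eqmod H p (hred q p).
Proof.
exists (p %/ H).
by rewrite /hred {1}(Pdiv.IdomainUnit.divp_eq unit_lead_hermPoly p) addrK.
Qed.

Lemma hred_eqmod p r : eqmod H p r -> hred q p = hred q r.
Proof.
move=> [k e]; apply/esym/(Pdiv.IdomainUnit.modpP unit_lead_hermPoly (q := k + r %/ H)).
  by rewrite mulrDl -addrA -(Pdiv.IdomainUnit.divp_eq unit_lead_hermPoly) -e subrK.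
by rewrite ltn_modpN0 ?monic_neq0 ?monic_hermPoly.
Qed.

Lemma degH_eqmod p r : eqmod H p r -> degH q p = degH q r.
Proof. by move=> /hred_eqmod e; rewrite !degHE e. Qed.

Lemma degH_le_wdeg p : (degH q p <= wdegH p)%N.
Proof. exact: wdeg_modp monic_hermPoly wdeg_hermPoly p. Qed.

Lemma degHB p r : (degH q (p - r) <= maxn (degH q p) (degH q r))%N.
Proof.
rewrite (degH_eqmod (eqmodD (eqmod_hred p) (eqmodN (eqmod_hred r)))).
exact: leq_trans (degH_le_wdeg _) (wdegB _ _ _ _).
Qed.

Lemma degHM p r : (degH q (p * r) <= degH q p + degH q r)%N.
Proof.
rewrite (degH_eqmod (eqmodM (eqmod_hred p) (eqmod_hred r))).
exact: leq_trans (degH_le_wdeg _) (wdegM _ _ _ _).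
Qed.

Lemma degHX p n : (degH q (p ^+ n) <= n * degH q p)%N.
Proof.
rewrite (degH_eqmod (eqmodX n (eqmod_hred p))).
exact: leq_trans (degH_le_wdeg _) (wdegX _ _ _ _).
Qed.

Lemma degH_mulC_monic p (c : {poly F}) :
  c \is monic -> (degH q p <= degH q (p * c%:P) - (size c).-1 * q)%N.
Proof.
move=> mon_c; rewrite !degHE /hred mulrC mul_polyC.
rewrite Pdiv.IdomainUnit.modpZl ?unit_lead_hermPoly // -mul_polyC mulrC.
exact: wdeg_mulC_monic.
Qed.

Lemma hcong_eqmod p r g k : eqmod H (p + g * k) r -> hcong q p r g.
Proof.
by move=> [k' e]; exists (- k); apply/heq_eqmod; exists k'; rewrite -e; ring.
Qed.

End HermitianCurve.

Unset Implicit Arguments.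

Theorem theorem2 (F : finFieldType) (q : nat)
  (hq1 : (1 < q)%N) (hF : #|F| = (q ^ 2)%N)
  (m l s tau : nat)
  (f Lam Rr Om : {poly {poly F}}) (e : F -> F -> F) :
  let g := ((q * (q - 1)) %/ 2)%N in
  let n := (q ^ 3)%N in
  let G := hX F ^+ (q ^ 2) - hX F in
  (2 * (g - 1) < m)%N -> (m < n)%N ->
  (1 <= s)%N -> (s <= l)%N ->
  (degH q f <= m)%N ->
  ~ heq q Lam 0 ->
  (forall a b : F, onHerm q a b -> e a b != 0 -> hevalAt Lam a b = 0) ->
  (degH q Rr < n + 2 * g)%N ->
  (forall a b : F, onHerm q a b -> hevalAt Rr a b = hevalAt f a b + e a b) ->
  heq q (Om * G) (Lam * (f - Rr)) ->
  (degH q Lam <= tau)%N ->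
  let A := fun t i : nat => ('C(t, i))%:R * Rr ^+ (t - i) * G ^+ i in
  let Gt := fun t : nat =>
    if (t < s)%N then hX F ^+ ((t * (n + 2 * g - 1) + tau) %/ q).+1%N
    else G ^+ s in
  let Lami := fun i : nat => Lam ^+ (s - i) * Om ^+ i in
  let Psi := fun t : nat => Lam ^+ s * f ^+ t in
  [/\ forall t : nat, (1 <= t <= l)%N ->
        hcong q (\sum_(i < s) Lami i * A t i) (Psi t) (Gt t),
      forall i : nat, (i < s)%N ->
        (degH q (Lami i) <= s * tau + i * (2 * g - 1))%N
    & forall t : nat, (1 <= t <= l)%N ->
        (degH q (Psi t) <= s * tau + t * m)%N].
Proof.
move=> g n G _ lt_mn _ _ deg_f _ _ deg_Rr _ hOm deg_Lam A Gt Lami Psi.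
have q2_gt1 : (1 < q ^ 2)%N by rewrite (ltn_trans hq1) // -{1}(expn1 q) ltn_exp2l.
have key := (heq_eqmod hq1 _ _).1 hOm.
have deg_Om : (degH q Om <= tau + (2 * g - 1))%N.
  apply: leq_trans (degH_mulC_monic hq1 Om (monicXnsubX _ q2_gt1)) _.
  have -> : (('X^(q ^ 2) - 'X)%:P = G) by rewrite /G /hX rmorphB rmorphXn.
  rewrite (degH_eqmod hq1 key) size_XnsubX // -expnSr -/n leq_subLR.
  apply: leq_trans (degHM hq1 _ _) _; apply: leq_trans (leq_add deg_Lam (degHB hq1 _ _)) _.
  lia.
split=> [t _ | i lt_is | t _].
- have := key_equation_eqmod s t key; rewrite /Gt; case: ltnP => [lt_ts | _] eq_t.
    apply: (hcong_eqmod hq1 (k := 0)); rewrite mulr0 addr0.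
    by rewrite big_geq // !mulr0 addr0 in eq_t.
  exact: hcong_eqmod eq_t.
- have -> : (s * tau + i * (2 * g - 1) = (s - i) * tau + i * (tau + (2 * g - 1)))%N.
    by rewrite mulnDr addnA -mulnDl subnK // ltnW.
  apply: leq_trans (degHM hq1 _ _) (leq_add _ _); apply: leq_trans (degHX hq1 _ _) _;
    by rewrite leq_mul2l ?deg_Lam ?deg_Om orbT.
- apply: leq_trans (degHM hq1 _ _) (leq_add _ _); apply: leq_trans (degHX hq1 _ _) _;
    by rewrite leq_mul2l ?deg_Lam ?deg_f orbT.
Qed.
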